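(* Let $\beta>0$ and let the full-system state be decomposed as $\mathbf{s}=(\mathbf{s}_1,\dots,\mathbf{s}_K,\mathbf{s}_{\mathrm{env}})$, with total energy $$V_{\mathrm{tot}}(\mathbf{s})=\sum_{i=1}^K U_i(\mathbf{s}_i)+U_{\mathrm{env}}(\mathbf{s}_{\mathrm{env}})+U_{\mathrm{int}}(\mathbf{s}_1,\dots,\mathbf{s}_K,\mathbf{s}_{\mathrm{env}})$$ and true Boltzmann density $\pi(\mathbf{s})\propto\exp(-\beta V_{\mathrm{tot}}(\mathbf{s}))$. Assume that the priors are $p_i(\mathbf{x}_i)\propto\exp(-\beta U_i(\mathbf{x}_i))$ for $i=1,\dots,K$, that the projectors are $\Phi_i(\mathbf{s})=\mathbf{s}_i$, and that the context factor is $$\pi_{\mathrm{ctx}}(\mathbf{s})\propto\exp\!\Big(-\beta\big[U_{\mathrm{env}}(\mathbf{s}_{\mathrm{env}})+U_{\mathrm{int}}(\mathbf{s}_1,\dots,\mathbf{s}_K,\mathbf{s}_{\mathrm{env}})\big]\Big).$$ Then the $t\to0$ joint target $\pi_0$ (defined in the context), after marginalizing out $\mathbf{s}_1,\dots,\mathbf{s}_K$, satisfies $$\pi_0(\{\mathbf{x}_i\},\mathbf{s}_{\mathrm{env}})\propto\exp\!\big(-\beta V_{\mathrm{tot}}(\mathbf{x}_1,\dots,\mathbf{x}_K,\mathbf{s}_{\mathrm{env}})\big).$$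
   Context: Setting: there are $K$ prior variables $\mathbf{x}_i\in\mathcal{X}_i$, each with a prior density $p_i(\mathbf{x}_i)$ and a forward diffusion kernel $q_t^{(i)}(\mathbf{y}\mid\mathbf{x}_i)$ indexed by diffusion time $t\in[0,1]$, satisfying $\lim_{t\to0}q_t^{(i)}(\mathbf{y}\mid\mathbf{x}_i)=\delta(\mathbf{y}-\mathbf{x}_i)$ (Dirac delta). Projections $\Phi_i:\mathcal{S}\to\mathcal{X}_i$ map the full-system state $\mathbf{s}\in\mathcal{S}$ to the prior variables. A context schedule $q_{\mathrm{ctx}}(\mathbf{s},t)$ with $q_{\mathrm{ctx}}(\mathbf{s},0)=\pi_{\mathrm{ctx}}(\mathbf{s})$ is given. The joint target on $\mathcal{S}\times\prod_i\mathcal{X}_i$ is $$\pi_t(\mathbf{s},\{\mathbf{x}_i\})\propto q_{\mathrm{ctx}}(\mathbf{s},t)\prod_{i=1}^K p_i(\mathbf{x}_i)\,q_t^{(i)}(\Phi_i(\mathbf{s})\mid\mathbf{x}_i),$$ and its $t\to0$ limit is $$\pi_0(\mathbf{s},\{\mathbf{x}_i\})\propto\pi_{\mathrm{ctx}}(\mathbf{s})\prod_{i=1}^K p_i(\mathbf{x}_i)\,\delta(\Phi_i(\mathbf{s})-\mathbf{x}_i).$$ *)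

From HB Require Import structures.
From mathcomp Require Import all_boot all_order all_algebra.
From mathcomp Require Import all_classical all_reals all_analysis.
Set Implicit Arguments. Unset Strict Implicit. Unset Printing Implicit Defensive.
Import Order.TTheory GRing.Theory Num.Theory.
Local Open Scope classical_set_scope.
Local Open Scope ring_scope.

(* The block of prior variables ({x_i}) lives in the measurable
   space P, which (by a hypothesis of the theorem) is in bijection with the
   product  forall i : 'I_K, X i  through the coordinate maps [proj i].
   The full-system state is  s = (s_P, s_env) : P * E, with
   s_P = (s_1, ..., s_K), so that Phi_i(s) = proj i s.1 = s_i.
   The reference measure on the full-system space is the product measure
   mu \x nu of the reference measures on P and E (densities are w.r.t. it). *)

Definition Vtot {R : realType} {K : nat} {X : 'I_K -> Type} {P E : Type}
  (proj : forall i, P -> X i) (U : forall i, X i -> R)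
  (Uenv : E -> R) (Uint : P * E -> R) (s : P * E) : R :=
  \sum_(i < K) U i (proj i s.1) + Uenv s.2 + Uint s.

(* The (unnormalised) t -> 0 joint target pi_0 on S x prod_i X_i, as a
   set function on measurable sets of (P * E) * P:
     pi_0(ds, dx) = pi_ctx(s) prod_i p_i(x_i) delta_{Phi(s)}(dx) lam(ds),
   i.e. the Dirac factors prod_i delta(Phi_i(s) - x_i) are interpreted as the
   Dirac measure at x = Phi(s) = s.1:
     pi_0(A) = \int_{ s : (s, Phi(s)) \in A } pi_ctx(s) prod_i p_i(Phi_i(s)) lam(ds). *)
Definition pi0 {R : realType} {K : nat} {X : 'I_K -> Type}
  {dP dE : measure_display} {P : measurableType dP} {E : measurableType dE}
  (lam : set (P * E) -> \bar R)
  (proj : forall i, P -> X i) (p : forall i, X i -> R) (pictx : P * E -> R)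
  (A : set ((P * E) * P)) : \bar R :=
  (\int[lam]_(s in (fun s : P * E => (s, s.1)) @^-1` A)
     (pictx s * \prod_(i < K) p i (proj i s.1))%:E)%E.

(* Marginal of pi_0 obtained by integrating out s_1, ..., s_K: a set function
   on the space of ({x_i}, s_env) = P * E. *)
Definition pi0_marginal {R : realType} {K : nat} {X : 'I_K -> Type}
  {dP dE : measure_display} {P : measurableType dP} {E : measurableType dE}
  (lam : set (P * E) -> \bar R)
  (proj : forall i, P -> X i) (p : forall i, X i -> R) (pictx : P * E -> R)
  (B : set (P * E)) : \bar R :=
  pi0 lam proj p pictx [set z | B (z.2, z.1.2)].

From HB Require Import structures.
From mathcomp Require Import all_boot all_order all_algebra.
From mathcomp Require Import all_classical all_reals all_analysis.
From mathcomp Require Import measurable_realfun.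
Import Order.TTheory GRing.Theory Num.Theory.
Local Open Scope classical_set_scope.
Local Open Scope ring_scope.

(* The Dirac factors of pi_0 pin x = Phi(s) = s_P, so integrating out s_P
   leaves the density pi_ctx(x, s_env) prod_i p_i(x_i) on the space of
   ({x_i}, s_env).  With Boltzmann priors and context this product is
   exp(-beta [U_env + U_int]) prod_i exp(-beta U_i) = exp(-beta V_tot) up to
   the product of the normalising constants. *)

Lemma pi0_marginalE (R : realType) (K : nat) (X : 'I_K -> Type)
    (dP dE : measure_display) (P : measurableType dP) (E : measurableType dE)
    (lam : set (P * E) -> \bar R) (proj : forall i, P -> X i)
    (p : forall i, X i -> R) (pictx : P * E -> R) (B : set (P * E)) :
  pi0_marginal lam proj p pictx B =
  (\int[lam]_(z in B) (pictx z * \prod_(i < K) p i (proj i z.1))%:E)%E.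
Proof.
rewrite /pi0_marginal /pi0.
suff -> : (fun s : P * E => (s, s.1)) @^-1` [set z | B (z.2, z.1.2)] = B by [].
by apply/funext => -[].
Qed.

Lemma prodr_mul_expR (R : realType) (I : Type) (r : seq I) (c a : I -> R) :
  \prod_(i <- r) (c i * expR (a i)) =
  (\prod_(i <- r) c i) * expR (\sum_(i <- r) a i).
Proof. by rewrite big_split /= expR_sum. Qed.

Lemma Vtot_Boltzmann_product {R : realType} {K : nat} {X : 'I_K -> Type}
    {P E : Type} {proj : forall i, P -> X i} {U : forall i, X i -> R}
    {Uenv : E -> R} {Uint : P * E -> R} (beta : R)
    (p : forall i, X i -> R) (pictx : P * E -> R)
    (cp : 'I_K -> R) (cctx : R) (z : P * E) :
  (forall i x, p i x = cp i * expR (- beta * U i x)) ->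
  pictx z = cctx * expR (- beta * (Uenv z.2 + Uint z)) ->
  pictx z * \prod_(i < K) p i (proj i z.1) =
  (cctx * \prod_(i < K) cp i) * expR (- beta * Vtot proj U Uenv Uint z).
Proof.
move=> hp ->; under eq_bigr do rewrite hp.
rewrite prodr_mul_expR -mulr_sumr mulrACA -expRD -mulrDr /Vtot.
by congr (_ * expR (_ * _)); rewrite addrC addrA.
Qed.

Lemma measurable_Vtot {R : realType} {K : nat} {X : 'I_K -> Type}
    {dP dE : measure_display} {P : measurableType dP} {E : measurableType dE}
    {proj : forall i, P -> X i} {U : forall i, X i -> R}
    {Uenv : E -> R} {Uint : P * E -> R} :
  (forall i, measurable_fun setT (fun x : P => U i (proj i x))) ->
  measurable_fun setT Uenv -> measurable_fun setT Uint ->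
  measurable_fun setT (Vtot proj U Uenv Uint).
Proof.
move=> mU mUenv mUint; apply: measurable_funD => //; apply: measurable_funD.
- by apply: measurable_sum => i; exact: measurableT_comp (mU i) measurable_fst.
- exact: measurableT_comp mUenv measurable_snd.
Qed.

Lemma measurable_Boltzmann_weight {R : realType} {d : measure_display}
    {T : measurableType d} (beta : R) {V : T -> R} (D : set T) :
  measurable_fun setT V -> measurable_fun D (fun z => (expR (- beta * V z))%:E).
Proof.
move=> mV; apply/measurable_EFinP/measurable_funTS.
apply: (measurableT_comp (f := expR)) => //.
exact: measurable_funM (measurable_cst _) mV.
Qed.

Theorem proposition1 (R : realType) (beta : R) (K : nat) (X : 'I_K -> Type)
  (dP dE : measure_display) (P : measurableType dP) (E : measurableType dE)
  (mu : {sigma_finite_measure set P -> \bar R})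
  (nu : {sigma_finite_measure set E -> \bar R})
  (proj : forall i, P -> X i)
  (U : forall i, X i -> R) (Uenv : E -> R) (Uint : P * E -> R)
  (p : forall i, X i -> R) (pictx : P * E -> R) :
  0 < beta ->
  (* P is the product of the X i, with coordinates proj i *)
  (forall f : (forall i, X i), exists! x : P, forall i, proj i x = f i) ->
  (* measurability of the energies *)
  (forall i, measurable_fun setT (fun x : P => U i (proj i x))) ->
  measurable_fun setT Uenv ->
  measurable_fun setT Uint ->
  (* priors p_i ∝ exp(-beta U_i) *)
  (forall i, exists c : R, 0 < c /\ forall x, p i x = c * expR (- beta * U i x)) ->
  (* context factor pi_ctx ∝ exp(-beta [U_env + U_int]) *)
  (exists c : R, 0 < c /\
     forall s : P * E, pictx s = c * expR (- beta * (Uenv s.2 + Uint s))) ->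
  (* marginal of pi_0 over s_1..s_K is ∝ exp(-beta V_tot(x_1..x_K, s_env)) *)
  exists c : R, 0 < c /\
    forall B : set (P * E), measurable B ->
      pi0_marginal (mu \x nu)%E proj p pictx B =
      (c%:E * \int[(mu \x nu)%E]_(z in B)
                 (expR (- beta * Vtot proj U Uenv Uint z))%:E)%E.
Proof.
move=> _ _ mU mUenv mUint /choice[cp hcp] [cctx [cctx_gt0 hctx]].
have mV := measurable_Vtot mU mUenv mUint.
have c_gt0 : 0 < cctx * \prod_(i < K) cp i.
  by rewrite mulr_gt0 //; apply: prodr_gt0 => i _; case: (hcp i).
exists (cctx * \prod_(i < K) cp i); split => // B mB.
rewrite pi0_marginalE -ge0_integralZl_EFin ?ltW //.
- apply: eq_integral => z _; congr EFin.
  by apply: Vtot_Boltzmann_product => // i x; case: (hcp i) => _ ->.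
- exact: measurable_Boltzmann_weight mV.
Qed.
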